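(* Let $\sigma\colon\Sigma\to\Sigma$ be a two-sided subshift of finite type, $0<\theta<1$, $f\colon\Sigma\to\mathbb R$ Lipschitz w.r.t. $d_\theta$, and $F(x,r)=(\sigma x,r+f(x))$ on $\Sigma\times\mathbb R$. Let $K\subset\Sigma\times\mathbb R$ be compact with $\overline{\operatorname{int}(K)}=K$. If $p\in\Sigma\times\mathbb R$ satisfies $K\subset AC(p)$, then there is $N$ such that $K\subset AC_N(p)$.
   Context: $d_\theta(x,y)=\theta^{\max\{j:\ x_i=y_i\ \forall|i|<j\}}$, $f_n=\sum_{i<n}f\circ\sigma^i$. Strong stable/unstable manifolds: $(y,s)\in W^s(x,r)$ iff $y_i=x_i$ for all sufficiently large $i$ and $s-r=\lim_n(f_n(x)-f_n(y))$; $(y,s)\in W^u(x,r)$ iff $y_i=x_i$ for all sufficiently negative $i$ and $s-r=\lim_n(f_n(\sigma^{-n}y)-f_n(\sigma^{-n}x))$. $AC(p)$ is the set of points reachable from $p$ by a finite chain of points each in $W^s$ or $W^u$ of the previous one. For $n\in\mathbb Z$ and $x\in\Sigma$: $W^s_n(x)=\{y: y_i=x_i\ \forall i\ge n\}$, $W^u_n(x)=\{y: y_i=x_i\ \forall i\le -n\}$; for points of $\Sigma\times\mathbb R$, $(y,t)\in W^s_n(x,s)$ iff $(y,t)\in W^s(x,s)$ and $y\in W^s_n(x)$, and similarly for $W^u_n$. A $us$-$N$-path from $p$ to $q$ is a sequence $p=p_0,\dots,p_k=q$ with $k\le N$ and $p_{j+1}\in W^s_N(p_j)\cup W^u_N(p_j)$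 for each $j$; $AC_N(p)$ is the set of $q$ reachable from $p$ by a $us$-$N$-path. *)

From Stdlib Require Import Reals ZArith List Classical ClassicalEpsilon.
Open Scope R_scope.

(* Ambient points: sequences Z -> symbols (symbols are nats < k). *)
Definition Seq := Z -> nat.
Definition Pt := (Seq * R)%type.

(* Two-sided subshift of finite type with alphabet {0,..,k-1}
   and 0-1 transition matrix A. *)
Definition inSFT (k : nat) (A : nat -> nat -> bool) (x : Seq) : Prop :=
  forall i : Z, (x i < k)%nat /\ A (x i) (x (i + 1)%Z) = true.

Definition inSFTR k A (p : Pt) : Prop := inSFT k A (fst p).

Definition agree (x y : Seq) (j : nat) : Prop :=
  forall i : Z, (Z.abs i < Z.of_nat j)%Z -> x i = y i.

(* d_theta(x,y) = theta^(max{j : x_i = y_i for all |i| < j}), = 0 if x = y. *)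
Definition dtheta (theta : R) (x y : Seq) : R :=
  match excluded_middle_informative (forall j, agree x y j) with
  | left _ => 0
  | right _ =>
      theta ^ (epsilon (inhabits 0%nat)
                 (fun j => agree x y j /\ ~ agree x y (S j)))
  end.

Definition lipschitz_theta k A (theta : R) (f : Seq -> R) : Prop :=
  exists C : R, forall x y, inSFT k A x -> inSFT k A y ->
    Rabs (f x - f y) <= C * dtheta theta x y.

Definition distP (theta : R) (p q : Pt) : R :=
  Rmax (dtheta theta (fst p) (fst q)) (Rabs (snd p - snd q)).

Definition is_openP k A theta (U : Pt -> Prop) : Prop :=
  (forall p, U p -> inSFTR k A p) /\
  forall p, U p -> exists eps, 0 < eps /\
    forall q, inSFTR k A q -> distP theta p q < eps -> U q.

Definition interiorP k A theta (S : Pt -> Prop) (p : Pt) : Prop :=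
  S p /\ inSFTR k A p /\ exists eps, 0 < eps /\
    forall q, inSFTR k A q -> distP theta p q < eps -> S q.

Definition closureP k A theta (S : Pt -> Prop) (p : Pt) : Prop :=
  inSFTR k A p /\ forall eps, 0 < eps -> exists q, S q /\ distP theta p q < eps.

Definition is_compactP k A theta (K : Pt -> Prop) : Prop :=
  (forall p, K p -> inSFTR k A p) /\
  forall (I : Type) (U : I -> Pt -> Prop),
    (forall i, is_openP k A theta (U i)) ->
    (forall p, K p -> exists i, U i p) ->
    exists l : list I, forall p, K p -> exists i, In i l /\ U i p.

Definition shift (x : Seq) : Seq := fun i => x (i + 1)%Z.
Definition shift_inv_n (n : nat) (x : Seq) : Seq := fun i => x (i - Z.of_nat n)%Z.

Fixpoint birk (f : Seq -> R) (n : nat) (x : Seq) : R :=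
  match n with
  | O => 0
  | S m => birk f m x + f (Nat.iter m shift x)
  end.

Definition Ws k A (f : Seq -> R) (p q : Pt) : Prop :=
  let (x, r) := p in let (y, s) := q in
  inSFT k A y /\
  (exists M : Z, forall i, (M <= i)%Z -> y i = x i) /\
  Un_cv (fun n => birk f n x - birk f n y) (s - r).

Definition Wu k A (f : Seq -> R) (p q : Pt) : Prop :=
  let (x, r) := p in let (y, s) := q in
  inSFT k A y /\
  (exists M : Z, forall i, (i <= M)%Z -> y i = x i) /\
  Un_cv (fun n => birk f n (shift_inv_n n y) - birk f n (shift_inv_n n x)) (s - r).

Definition Ws_n k A f (n : Z) (p q : Pt) : Prop :=
  Ws k A f p q /\ forall i, (n <= i)%Z -> fst q i = fst p i.

Definition Wu_n k A f (n : Z) (p q : Pt) : Prop :=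
  Wu k A f p q /\ forall i, (i <= - n)%Z -> fst q i = fst p i.

Inductive AC k A f (p : Pt) : Pt -> Prop :=
  | AC_refl : AC k A f p p
  | AC_step : forall q r, AC k A f p q -> (Ws k A f q r \/ Wu k A f q r) ->
      AC k A f p r.

Inductive chainN k A f (N : nat) (p : Pt) : nat -> Pt -> Prop :=
  | chainN_refl : chainN k A f N p 0 p
  | chainN_step : forall m q r, chainN k A f N p m q ->
      (Ws_n k A f (Z.of_nat N) q r \/ Wu_n k A f (Z.of_nat N) q r) ->
      chainN k A f N p (S m) r.

Definition AC_N k A f (N : nat) (p q : Pt) : Prop :=
  exists m, (m <= N)%nat /\ chainN k A f N p m q.

(* Holonomy along a stable (unstable) manifold is the sum of a series of Lipschitz
   increments decaying like theta^j, so it exists and depends continuously on the endpoints.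
   Consequently a us-path can be shadowed, with the same number of legs, from any point near
   its origin, ending near its end; and, by a diagonal (Koenig) argument on the symbolic
   coordinates, every AC_N(p) is closed.  K is compact with nonempty interior and is covered
   by the increasing closed sets AC_N(p), so by Baire's argument some AC_N0(p) contains a
   cylinder around a point v.  For q in K, join q to v through p and shadow this path from
   the points near q: it lands in that cylinder, from which p is reached in N0 more legs.
   So every point of K has a neighbourhood inside some AC_N(p), and compactness of K makes
   N uniform. *)

From Pilot Require Import Defs.
From Stdlib Require Import Reals ZArith List.
From Stdlib Require Import Lia Lra Classical ClassicalEpsilon FunctionalExtensionality.
Open Scope R_scope.

Lemma agree_mono x y j j' : (j' <= j)%nat -> agree x y j -> agree x y j'.
Proof. intros Hj H i Hi; apply H; lia. Qed.

Lemma agree_refl x j : agree x x j.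
Proof. intros i _; reflexivity. Qed.

Lemma agree_sym x y j : agree x y j -> agree y x j.
Proof. intros H i Hi; symmetry; auto. Qed.

Lemma agree_trans x y z j : agree x y j -> agree y z j -> agree x z j.
Proof. intros H1 H2 i Hi; rewrite H1; auto. Qed.

Lemma agree_all_eq x y : (forall j, agree x y j) -> x = y.
Proof.
  intros H; apply functional_extensionality; intros i.
  apply (H (S (Z.to_nat (Z.abs i)))); lia.
Qed.

Section ThetaPowers.

Variable theta : R.
Hypothesis Htheta : 0 < theta < 1.

Lemma pow_theta_le_1 n : 0 <= theta ^ n <= 1.
Proof. split; [apply pow_le; lra|rewrite <- (pow1 n); apply pow_incr; lra]. Qed.

Lemma pow_theta_antimono a b : (b <= a)%nat -> theta ^ a <= theta ^ b.
Proof.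
  intros Hab; replace a with (b + (a - b))%nat by lia; rewrite pow_add.
  pose proof (pow_theta_le_1 b); pose proof (pow_theta_le_1 (a - b)); nra.
Qed.

Lemma pow_theta_sub_le j W : theta ^ (j - W) <= theta ^ j / theta ^ W.
Proof.
  assert (HW : 0 < theta ^ W) by (apply pow_lt; lra).
  apply (Rmult_le_reg_l (theta ^ W)); auto.
  replace (theta ^ W * (theta ^ j / theta ^ W)) with (theta ^ j) by (field; lra).
  destruct (le_lt_dec W j).
  - rewrite <- pow_add; replace (W + (j - W))%nat with j by lia; lra.
  - replace (j - W)%nat with 0%nat by lia.
    rewrite pow_O; pose proof (pow_theta_antimono W j ltac:(lia)); lra.
Qed.

Lemma pow_theta_small a e : 0 < e -> exists n, a * theta ^ n < e.
Proof.
  intros He.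
  destruct (pow_lt_1_zero theta) with (y := e / (Rabs a + 1)) as [n Hn].
  - rewrite Rabs_right; lra.
  - apply Rdiv_lt_0_compat; [|pose proof (Rabs_pos a)]; lra.
  - exists n; specialize (Hn n (le_n _)).
    pose proof (pow_theta_le_1 n) as Hn01; rewrite Rabs_right in Hn by lra.
    assert (theta ^ n * (Rabs a + 1) < e).
    { apply (Rmult_lt_reg_r (/ (Rabs a + 1)));
        [apply Rinv_0_lt_compat; pose proof (Rabs_pos a); lra|].
      rewrite Rmult_assoc, Rinv_r, Rmult_1_r by (pose proof (Rabs_pos a); lra); exact Hn. }
    pose proof (Rmult_le_compat_r (theta ^ n) _ _ (proj1 Hn01) (RRle_abs a)); nra.
Qed.

Lemma dtheta_nonneg x y : 0 <= dtheta theta x y.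
Proof. unfold dtheta; destruct excluded_middle_informative; [lra|apply pow_le; lra]. Qed.

Lemma agree_last x y : ~ (forall j, agree x y j) -> exists j, agree x y j /\ ~ agree x y (S j).
Proof.
  intros H; apply NNPP; intros Hno; apply H; intros j; induction j as [|j IH].
  - intros i Hi; lia.
  - apply NNPP; intros Hj; apply Hno; eauto.
Qed.

Lemma dtheta_le_pow x y L : agree x y L -> dtheta theta x y <= theta ^ L.
Proof.
  intros HL; unfold dtheta; destruct excluded_middle_informative as [_|Hn].
  - apply pow_le; lra.
  - destruct (epsilon_spec (inhabits 0%nat) _ (agree_last x y Hn)) as [_ Hj].
    apply pow_theta_antimono; apply Nat.nlt_ge; intros Hlt.
    apply Hj; eapply agree_mono; [|exact HL]; lia.
Qed.

Lemma agree_of_dtheta_lt x y L : dtheta theta x y < theta ^ L -> agree x y L.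
Proof.
  intros H; unfold dtheta in H; destruct excluded_middle_informative as [Hall|Hn]; auto.
  destruct (epsilon_spec (inhabits 0%nat) _ (agree_last x y Hn)) as [Hj _].
  eapply agree_mono; [|exact Hj]; apply Nat.nlt_ge; intros Hlt.
  pose proof (pow_theta_antimono _ _ (Nat.lt_le_incl _ _ Hlt)); lra.
Qed.

End ThetaPowers.

Fixpoint psum (t : nat -> R) (n : nat) : R :=
  match n with O => 0 | S m => psum t m + t m end.

Lemma psum_minus t t' n : psum (fun j => t j - t' j) n = psum t n - psum t' n.
Proof. induction n as [|n IH]; simpl; [|rewrite IH]; ring. Qed.

Lemma psum_scal c t n : psum (fun j => c * t j) n = c * psum t n.
Proof. induction n as [|n IH]; simpl; [|rewrite IH]; ring. Qed.

Lemma psum_const c n : psum (fun _ => c) n = INR n * c.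
Proof. induction n as [|n IH]; simpl psum; [simpl|rewrite IH, S_INR]; ring. Qed.

Lemma psum_add t n m : psum t (n + m) = psum t n + psum (fun i => t (n + i)%nat) m.
Proof.
  induction m as [|m IH]; simpl; [rewrite Nat.add_0_r; ring|].
  rewrite Nat.add_succ_r; simpl; rewrite IH; ring.
Qed.

Lemma psum_abs_le a b n :
  (forall j, (j < n)%nat -> Rabs (a j) <= b j) -> Rabs (psum a n) <= psum b n.
Proof.
  induction n as [|n IH]; simpl; intros H; [rewrite Rabs_R0; lra|].
  eapply Rle_trans; [apply Rabs_triang|].
  apply Rplus_le_compat; [apply IH; intros|apply H]; auto.
Qed.

Lemma psum_ext t t' n : (forall j, (j < n)%nat -> t j = t' j) -> psum t n = psum t' n.
Proof.
  induction n as [|n IH]; simpl; intros H; auto.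
  rewrite IH, H; auto.
Qed.

Lemma psum_rev t n : psum t n = psum (fun m => t (n - S m)%nat) n.
Proof.
  induction n as [|n IH]; auto.
  change (psum (fun m => t (S n - S m)%nat) (S n))
    with (psum (fun m => t (S n - S m)%nat) (1 + n)).
  rewrite psum_add; simpl; rewrite <- IH, Nat.sub_0_r; ring.
Qed.

Lemma lim_abs_le u a J B :
  Un_cv u a -> (forall n, (J <= n)%nat -> Rabs (u n) <= B) -> Rabs a <= B.
Proof.
  intros Hu Hb; apply Rnot_lt_le; intros Hlt.
  destruct (Hu (Rabs a - B)) as [N HN]; [lra|].
  specialize (HN (max N J) ltac:(lia)); specialize (Hb (max N J) ltac:(lia)).
  unfold Rdist in HN; rewrite Rabs_minus_sym in HN.
  pose proof (Rabs_triang_inv a (u (max N J))); lra.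
Qed.

Section GeometricSeries.

Variable theta : R.
Hypothesis Htheta : 0 < theta < 1.

Lemma psum_geom_le J m : psum (fun i => theta ^ (J + i)) m <= theta ^ J / (1 - theta).
Proof.
  assert (Hgeom : psum (fun i => theta ^ (J + i)) m * (1 - theta) = theta ^ J * (1 - theta ^ m)).
  { induction m as [|m IH]; simpl psum; [simpl; ring|].
    rewrite Rmult_plus_distr_r, IH, pow_add; simpl; ring. }
  pose proof (pow_theta_le_1 theta Htheta m); pose proof (pow_theta_le_1 theta Htheta J).
  apply (Rmult_le_reg_r (1 - theta)); [lra|].
  rewrite Hgeom; unfold Rdiv; rewrite Rmult_assoc, Rinv_l by lra; nra.
Qed.

Lemma psum_tail_le C t n m : 0 <= C -> (forall j, Rabs (t j) <= C * theta ^ j) ->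
  Rabs (psum t (n + m) - psum t n) <= C * theta ^ n / (1 - theta).
Proof.
  intros HC Hb; rewrite psum_add.
  replace (psum t n + _ - psum t n) with (psum (fun i => t (n + i)%nat) m) by ring.
  eapply Rle_trans; [apply psum_abs_le with (b := fun i => C * theta ^ (n + i)); auto|].
  rewrite psum_scal; unfold Rdiv; rewrite Rmult_assoc.
  apply Rmult_le_compat_l; auto; apply psum_geom_le.
Qed.

Lemma psum_cv_geom C t : 0 <= C -> (forall j, Rabs (t j) <= C * theta ^ j) ->
  exists l, Un_cv (psum t) l.
Proof.
  intros HC Hb; destruct (R_complete (psum t)) as [l Hl]; [|eauto].
  intros eps Heps.
  destruct (pow_theta_small theta Htheta (C / (1 - theta)) eps Heps) as [N HN].
  exists N; intros n m Hn Hm; unfold Rdist.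
  assert (Htail : forall a b, (N <= a <= b)%nat -> Rabs (psum t b - psum t a) < eps).
  { intros a b Hab; replace b with (a + (b - a))%nat by lia.
    eapply Rle_lt_trans; [exact (psum_tail_le C t a (b - a) HC Hb)|].
    pose proof (pow_theta_antimono theta Htheta a N ltac:(lia)).
    assert (0 <= C / (1 - theta)) by (apply Rmult_le_pos; [|apply Rlt_le, Rinv_0_lt_compat]; lra).
    replace (C * theta ^ a / (1 - theta)) with (C / (1 - theta) * theta ^ a) by (field; lra).
    nra. }
  destruct (le_lt_dec n m); [rewrite Rabs_minus_sym|]; apply Htail; lia.
Qed.

Lemma lim_psum_diff_le C t t' J eta l l' : 0 <= C ->
  (forall j, Rabs (t j) <= C * theta ^ j) -> (forall j, Rabs (t' j) <= C * theta ^ j) ->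
  (forall j, (j < J)%nat -> Rabs (t j - t' j) <= eta) ->
  Un_cv (psum t) l -> Un_cv (psum t') l' ->
  Rabs (l - l') <= INR J * eta + 2 * C / (1 - theta) * theta ^ J.
Proof.
  intros HC Hb Hb' Hclose Hl Hl'.
  apply lim_abs_le with (u := fun n => psum t n - psum t' n) (J := J); [apply CV_minus; auto|].
  intros n Hn; rewrite <- psum_minus; replace n with (J + (n - J))%nat by lia.
  rewrite psum_add; eapply Rle_trans; [apply Rabs_triang|]; apply Rplus_le_compat.
  - rewrite <- psum_const; apply psum_abs_le; auto.
  - eapply Rle_trans.
    + apply psum_abs_le with (b := fun i => 2 * C * theta ^ (J + i)); intros j _.
      eapply Rle_trans; [apply Rabs_triang|]; rewrite Rabs_Ropp.
      specialize (Hb (J + j)%nat); specialize (Hb' (J + j)%nat); lra.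
    + rewrite psum_scal.
      replace (2 * C / (1 - theta) * theta ^ J) with (2 * C * (theta ^ J / (1 - theta)))
        by (field; lra).
      apply Rmult_le_compat_l; [lra|apply psum_geom_le].
Qed.

End GeometricSeries.

(** * Holonomies *)

Definition sh (z : Z) (x : Seq) : Seq := fun i => x (i + z)%Z.

Lemma iter_shift_sh j x : Nat.iter j Defs.shift x = sh (Z.of_nat j) x.
Proof.
  induction j as [|j IH]; simpl; [|rewrite IH];
    unfold Defs.shift, sh; apply functional_extensionality; intros i; f_equal; lia.
Qed.

Lemma birk_psum f n x : birk f n x = psum (fun j => f (sh (Z.of_nat j) x)) n.
Proof. induction n as [|n IH]; simpl; [|rewrite IH, iter_shift_sh]; reflexivity. Qed.

Lemma birk_shift_inv f n y :
  birk f n (shift_inv_n n y) = psum (fun m => f (sh (- Z.of_nat (S m)) y)) n.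
Proof.
  rewrite birk_psum, psum_rev; apply psum_ext; intros m Hm; f_equal.
  unfold sh, shift_inv_n; apply functional_extensionality; intros i; f_equal; lia.
Qed.

(* [b = true] is the stable direction, [b = false] the unstable one. *)
Definition half (b : bool) (W : nat) (x y : Seq) : Prop :=
  if b then forall i, (Z.of_nat W <= i)%Z -> y i = x i
  else forall i, (i <= - Z.of_nat W)%Z -> y i = x i.

Definition hol_seq (b : bool) (f : Seq -> R) (x y : Seq) (n : nat) : R :=
  if b then birk f n x - birk f n y
  else birk f n (shift_inv_n n y) - birk f n (shift_inv_n n x).

Definition hol_term (b : bool) (f : Seq -> R) (x y : Seq) (j : nat) : R :=
  if b then f (sh (Z.of_nat j) x) - f (sh (Z.of_nat j) y)
  else f (sh (- Z.of_nat (S j)) y) - f (sh (- Z.of_nat (S j)) x).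

Lemma hol_seq_psum b f x y : hol_seq b f x y = psum (hol_term b f x y).
Proof.
  apply functional_extensionality; intros n; destruct b; unfold hol_seq, hol_term;
    rewrite psum_minus; [rewrite !birk_psum|rewrite !birk_shift_inv]; reflexivity.
Qed.

Lemma hol_seq_swap b f x y n : hol_seq b f y x n = - hol_seq b f x y n.
Proof. destruct b; unfold hol_seq; ring. Qed.

Definition Wdir k A f (b : bool) (W : nat) : Pt -> Pt -> Prop :=
  if b then Ws_n k A f (Z.of_nat W) else Wu_n k A f (Z.of_nat W).

Lemma Wdir_iff k A f b W q r : Wdir k A f b W q r <->
  inSFT k A (fst r) /\ half b W (fst q) (fst r) /\
  Un_cv (hol_seq b f (fst q) (fst r)) (snd r - snd q).
Proof.
  destruct q as [x s], r as [y t], b; unfold Wdir, Ws_n, Wu_n, Ws, Wu; simpl; split.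
  - intros [[Hy [_ Hl]] Hh]; auto.
  - intros [Hy [Hh Hl]]; refine (conj (conj Hy (conj _ Hl)) Hh); exists (Z.of_nat W); auto.
  - intros [[Hy [_ Hl]] Hh]; auto.
  - intros [Hy [Hh Hl]]; refine (conj (conj Hy (conj _ Hl)) Hh); exists (- Z.of_nat W)%Z; auto.
Qed.

Lemma inSFT_sh k A x z : inSFT k A x -> inSFT k A (sh z x).
Proof.
  intros H i; unfold sh; replace (i + 1 + z)%Z with (i + z + 1)%Z by lia; apply H.
Qed.

Lemma agree_sh x x' L z : agree x x' L -> agree (sh z x) (sh z x') (L - Z.to_nat (Z.abs z)).
Proof. intros H i Hi; apply H; lia. Qed.

Section Holonomy.

Variables (k : nat) (A : nat -> nat -> bool) (theta : R) (f : Seq -> R) (C0 : R).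
Hypothesis Htheta : 0 < theta < 1.
Hypothesis HC0 : 0 <= C0.
Hypothesis Hlip : forall x y, inSFT k A x -> inSFT k A y ->
  Rabs (f x - f y) <= C0 * dtheta theta x y.

Lemma lipschitz_agree x y n : inSFT k A x -> inSFT k A y -> agree x y n ->
  Rabs (f x - f y) <= C0 * theta ^ n.
Proof.
  intros Hx Hy Hn; eapply Rle_trans; [apply Hlip; auto|].
  apply Rmult_le_compat_l; auto; apply dtheta_le_pow; auto.
Qed.

Lemma hol_term_bound b W x y j : inSFT k A x -> inSFT k A y -> half b W x y ->
  Rabs (hol_term b f x y j) <= C0 / theta ^ W * theta ^ j.
Proof.
  intros Hx Hy Hh; eapply Rle_trans.
  - destruct b; unfold hol_term; [|rewrite Rabs_minus_sym];
      apply (lipschitz_agree _ _ (j - W)); auto using inSFT_sh;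
      intros i Hi; unfold sh; symmetry; apply Hh; lia.
  - replace (C0 / theta ^ W * theta ^ j) with (C0 * (theta ^ j / theta ^ W))
      by (field; apply pow_nonzero; lra).
    apply Rmult_le_compat_l; auto; apply pow_theta_sub_le; auto.
Qed.

Lemma hol_term_close b x y x' y' L j :
  inSFT k A x -> inSFT k A y -> inSFT k A x' -> inSFT k A y' ->
  agree x x' L -> agree y y' L ->
  Rabs (hol_term b f x y j - hol_term b f x' y' j) <= 2 * C0 * theta ^ (L - S j).
Proof.
  intros Hx Hy Hx' Hy' Hax Hay.
  assert (Hsh : forall u u' z, inSFT k A u -> inSFT k A u' -> agree u u' L ->
    (Z.to_nat (Z.abs z) <= S j)%nat -> Rabs (f (sh z u) - f (sh z u')) <= C0 * theta ^ (L - S j)).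
  { intros u u' z Hu Hu' Ha Hz; eapply Rle_trans.
    - apply lipschitz_agree; auto using inSFT_sh; apply agree_sh; exact Ha.
    - apply Rmult_le_compat_l; auto; apply pow_theta_antimono; auto; lia. }
  destruct b; unfold hol_term;
    match goal with |- Rabs ((?a - ?b) - (?c - ?d)) <= _ =>
      replace ((a - b) - (c - d)) with ((a - c) - (b - d)) by ring end;
    eapply Rle_trans; try apply Rabs_triang; rewrite Rabs_Ropp;
    (replace (2 * C0 * theta ^ (L - S j)) with
       (C0 * theta ^ (L - S j) + C0 * theta ^ (L - S j)) by ring);
    apply Rplus_le_compat; apply Hsh; auto; lia.
Qed.

Lemma hol_exists b W x y : inSFT k A x -> inSFT k A y -> half b W x y ->
  exists l, Un_cv (hol_seq b f x y) l.
Proof.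
  intros Hx Hy Hh; rewrite hol_seq_psum.
  apply (psum_cv_geom theta Htheta (C0 / theta ^ W)).
  - apply Rmult_le_pos; auto; apply Rlt_le, Rinv_0_lt_compat, pow_lt; lra.
  - intros j; apply hol_term_bound; auto.
Qed.

Lemma hol_continuous W e : 0 < e -> exists L, forall b x y x' y' l l',
  inSFT k A x -> inSFT k A y -> inSFT k A x' -> inSFT k A y' ->
  half b W x y -> half b W x' y' -> agree x x' L -> agree y y' L ->
  Un_cv (hol_seq b f x y) l -> Un_cv (hol_seq b f x' y') l' -> Rabs (l - l') <= e.
Proof.
  intros He; set (C := C0 / theta ^ W).
  assert (HC : 0 <= C) by (apply Rmult_le_pos; auto; apply Rlt_le, Rinv_0_lt_compat, pow_lt; lra).
  destruct (pow_theta_small theta Htheta (2 * C / (1 - theta)) (e / 2)) as [J HJ]; [lra|].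
  destruct (pow_theta_small theta Htheta (INR J * (2 * C0)) (e / 2)) as [L' HL']; [lra|].
  exists (J + L')%nat; intros b x y x' y' l l' Hx Hy Hx' Hy' Hh Hh' Hax Hay Hl Hl'.
  rewrite hol_seq_psum in Hl, Hl'.
  eapply Rle_trans.
  - apply (lim_psum_diff_le theta Htheta C (hol_term b f x y) (hol_term b f x' y') J
             (2 * C0 * theta ^ L')); auto.
    + intros j; apply hol_term_bound; auto.
    + intros j; apply hol_term_bound; auto.
    + intros j Hj; eapply Rle_trans; [apply hol_term_close; eauto|].
      apply Rmult_le_compat_l; [lra|apply pow_theta_antimono; auto; lia].
  - rewrite <- Rmult_assoc; lra.
Qed.

End Holonomy.

Lemma half_mono b W W' x y : (W <= W')%nat -> half b W x y -> half b W' x y.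
Proof. destruct b; simpl; intros HW H i Hi; apply H; lia. Qed.

Lemma half_sym b W x y : half b W x y -> half b W y x.
Proof. destruct b; simpl; intros H i Hi; symmetry; auto. Qed.

Section Chains.

Variables (k : nat) (A : nat -> nat -> bool) (f : Seq -> R).

Lemma Wdir_mono b W W' q r : (W <= W')%nat -> Wdir k A f b W q r -> Wdir k A f b W' q r.
Proof.
  intros HW; rewrite !Wdir_iff; intros [Hr [Hh Hl]]; split; [|split]; auto.
  eapply half_mono; eauto.
Qed.

Lemma Wdir_refl b W q : inSFTR k A q -> Wdir k A f b W q q.
Proof.
  intros Hq; apply Wdir_iff; split; [|split]; auto.
  - destruct b; intros i _; reflexivity.
  - rewrite Rminus_diag; intros e He; exists 0%nat; intros n _; unfold Rdist.
    destruct b; unfold hol_seq; rewrite !Rminus_diag, Rabs_R0; exact He.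
Qed.

Lemma Wdir_sym b W q r : inSFTR k A q -> Wdir k A f b W q r -> Wdir k A f b W r q.
Proof.
  intros Hq; rewrite !Wdir_iff; intros [Hr [Hh Hl]]; split; [|split]; auto.
  - apply half_sym; auto.
  - replace (snd q - snd r) with (- (snd r - snd q)) by ring.
    apply Un_cv_ext with (opp_seq (hol_seq b f (fst q) (fst r))); [|apply CV_opp; auto].
    intros n; unfold opp_seq; rewrite (hol_seq_swap b f (fst q) (fst r)); reflexivity.
Qed.

Definition step (W : nat) (q r : Pt) : Prop :=
  Ws_n k A f (Z.of_nat W) q r \/ Wu_n k A f (Z.of_nat W) q r.

Lemma step_iff W q r : step W q r <-> exists b, Wdir k A f b W q r.
Proof.
  split; [intros [H|H]; [exists true|exists false]; exact H|].
  intros [[|] H]; [left|right]; exact H.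
Qed.

Lemma step_SFT W q r : step W q r -> inSFTR k A r.
Proof. rewrite step_iff; intros [b H]; apply Wdir_iff in H; apply H. Qed.

Lemma step_mono W W' q r : (W <= W')%nat -> step W q r -> step W' q r.
Proof. rewrite !step_iff; intros HW [b H]; exists b; eapply Wdir_mono; eauto. Qed.

Lemma step_refl W q : inSFTR k A q -> step W q q.
Proof. intros Hq; apply step_iff; exists true; apply Wdir_refl; auto. Qed.

Lemma step_sym W q r : inSFTR k A q -> step W q r -> step W r q.
Proof. rewrite !step_iff; intros Hq [b H]; exists b; apply Wdir_sym; auto. Qed.

Lemma chain_SFT W p m q : inSFTR k A p -> chainN k A f W p m q -> inSFTR k A q.
Proof. intros Hp H; induction H; auto; eapply step_SFT; eauto. Qed.

Lemma chain_mono W W' p m q : (W <= W')%nat -> chainN k A f W p m q -> chainN k A f W' p m q.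
Proof.
  intros HW H; induction H; [apply chainN_refl|].
  apply chainN_step with q; auto; apply (step_mono W); auto.
Qed.

Lemma chain_app W p m q m' r :
  chainN k A f W p m q -> chainN k A f W q m' r -> chainN k A f W p (m + m') r.
Proof.
  intros H1 H2; induction H2; [rewrite Nat.add_0_r; auto|].
  rewrite Nat.add_succ_r; econstructor; eauto.
Qed.

Lemma chain_one W p q : step W p q -> chainN k A f W p 1 q.
Proof. intros H; econstructor; [constructor|exact H]. Qed.

Lemma chain_rev W p m q : inSFTR k A p -> chainN k A f W p m q -> chainN k A f W q m p.
Proof.
  intros Hp H; induction H; [constructor|].
  replace (S m) with (1 + m)%nat by lia; eapply chain_app; [|apply IHchainN; auto].
  apply chain_one, step_sym; auto; eapply chain_SFT; eauto.
Qed.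

Lemma chain_pad W p m q N : inSFTR k A p -> chainN k A f W p m q -> (m <= N)%nat ->
  chainN k A f W p N q.
Proof.
  intros Hp H HN; replace N with (m + (N - m))%nat by lia; eapply chain_app; eauto.
  assert (Hq : inSFTR k A q) by (eapply chain_SFT; eauto).
  induction (N - m)%nat; econstructor; eauto; apply step_refl; auto.
Qed.

Lemma AC_N_mono N N' p q : (N <= N')%nat -> AC_N k A f N p q -> AC_N k A f N' p q.
Proof. intros HN [m [Hm Hc]]; exists m; split; [lia|]; eapply chain_mono; eauto. Qed.

Lemma step_of_Ws_Wu q r : Ws k A f q r \/ Wu k A f q r -> exists W, step W q r.
Proof.
  destruct q as [x a], r as [y b]; intros [[Hy [[M HM] Hl]]|[Hy [[M HM] Hl]]];
    exists (Z.to_nat (Z.abs M)); [left|right]; (split; [split; [|split]; eauto|]);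
    simpl; intros i Hi; apply HM; lia.
Qed.

Lemma AC_N_of_AC p q : AC k A f p q -> exists N, AC_N k A f N p q.
Proof.
  intros H; induction H as [|q r H [N [m [Hm Hc]]] Hqr].
  - exists 0%nat, 0%nat; split; [lia|constructor].
  - destruct (step_of_Ws_Wu q r Hqr) as [W HW].
    exists (Nat.max (S N) W), (S m); split; [lia|]; econstructor.
    + eapply chain_mono; [|exact Hc]; lia.
    + eapply step_mono; [|exact HW]; lia.
Qed.

Lemma chain_fun W p m q : chainN k A f W p m q -> exists ps : nat -> Pt,
  ps 0%nat = p /\ ps m = q /\ forall c, (c < m)%nat -> step W (ps c) (ps (S c)).
Proof.
  intros H; induction H as [|m q r H [ps [H0 [Hm Hs]]] Hqr].
  - exists (fun _ => p); repeat split; intros; lia.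
  - exists (fun c => if Nat.eqb c (S m) then r else ps c); simpl.
    rewrite Nat.eqb_refl; split; [|split]; auto.
    intros c Hc; destruct (Nat.eqb_spec c (S m)); [lia|].
    change (step W (ps c) (if Nat.eqb c m then r else ps (S c))).
    destruct (Nat.eqb_spec c m) as [->|E].
    + rewrite Hm; exact Hqr.
    + apply Hs; lia.
Qed.

Lemma fun_chain W (ps : nat -> Pt) m :
  (forall c, (c < m)%nat -> step W (ps c) (ps (S c))) -> chainN k A f W (ps 0%nat) m (ps m).
Proof.
  induction m as [|m IH]; intros H; [apply chainN_refl|].
  apply chainN_step with (ps m); [apply IH; auto|apply H]; lia.
Qed.

Lemma fun_chain_SFT W (ps : nat -> Pt) m : inSFTR k A (ps 0%nat) ->
  (forall c, (c < m)%nat -> step W (ps c) (ps (S c))) ->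
  forall c, (c <= m)%nat -> inSFTR k A (ps c).
Proof. intros H0 H c; induction c; intros Hc; auto; eapply step_SFT; apply H; lia. Qed.

End Chains.

(** * Shadowing *)

Definition near (L : nat) (d : R) (q q' : Pt) : Prop :=
  agree (fst q) (fst q') L /\ Rabs (snd q' - snd q) < d.

Lemma near_refl L d q : 0 < d -> near L d q q.
Proof. intros Hd; split; [apply agree_refl|rewrite Rminus_diag, Rabs_R0; exact Hd]. Qed.

Definition splice (B : Z) (u v : Seq) : Seq := fun i => if Z.ltb i B then u i else v i.

Lemma splice_SFT k A B u v : inSFT k A u -> inSFT k A v -> u B = v B ->
  inSFT k A (splice B u v).
Proof.
  intros Hu Hv HB i; unfold splice.
  destruct (Z.ltb_spec i B), (Z.ltb_spec (i + 1) B); try apply Hu; try apply Hv; [|lia].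
  replace B with (i + 1)%Z in HB by lia; rewrite <- HB; apply Hu.
Qed.

(* Follows [x1] on one side of the cut and [x'] on the other: it lies on the local stable
   (resp. unstable) manifold of [x'] and, when [x'] is close to [x], close to [x1]. *)
Definition graft (b : bool) (W : nat) (x' x1 : Seq) : Seq :=
  if b then splice (Z.of_nat W) x1 x' else splice (- Z.of_nat W) x' x1.

Lemma graft_spec k A b W L x x' x1 : (W < L)%nat -> inSFT k A x' -> inSFT k A x1 ->
  agree x x' L -> half b W x x1 ->
  inSFT k A (graft b W x' x1) /\ half b W x' (graft b W x' x1) /\ agree x1 (graft b W x' x1) L.
Proof.
  intros HWL Hx' Hx1 Ha Hh; destruct b; unfold graft, splice; simpl in Hh |- *.
  - split; [apply splice_SFT; auto; rewrite Hh by lia; apply Ha; lia|split].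
    + intros i Hi; destruct (Z.ltb_spec i (Z.of_nat W)); [lia|reflexivity].
    + intros i Hi; destruct (Z.ltb_spec i (Z.of_nat W)); [reflexivity|].
      rewrite Hh by lia; apply Ha; lia.
  - split; [apply splice_SFT; auto; rewrite Hh by lia; symmetry; apply Ha; lia|split].
    + intros i Hi; destruct (Z.ltb_spec i (- Z.of_nat W)); [reflexivity|].
      rewrite Hh by lia; apply Ha; lia.
    + intros i Hi; destruct (Z.ltb_spec i (- Z.of_nat W)); [|reflexivity].
      rewrite Hh by lia; apply Ha; lia.
Qed.

Section Shadowing.

Variables (k : nat) (A : nat -> nat -> bool) (theta : R) (f : Seq -> R) (C0 : R).
Hypothesis Htheta : 0 < theta < 1.
Hypothesis HC0 : 0 <= C0.
Hypothesis Hlip : forall x y, inSFT k A x -> inSFT k A y ->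
  Rabs (f x - f y) <= C0 * dtheta theta x y.

Lemma Wdir_shadow b W q q1 L0 e : 0 < e -> inSFTR k A q -> Wdir k A f b W q q1 ->
  exists L1, (L0 <= L1)%nat /\ forall q', inSFTR k A q' -> agree (fst q) (fst q') L1 ->
  exists q1', agree (fst q1) (fst q1') L0 /\ Wdir k A f b W q' q1' /\
    Rabs ((snd q1' - snd q') - (snd q1 - snd q)) <= e.
Proof.
  intros He Hq Hqq1; apply Wdir_iff in Hqq1 as [Hq1 [Hh Hl]].
  destruct (hol_continuous k A theta f C0 Htheta HC0 Hlip W e He) as [L HL].
  set (L1 := Nat.max L (Nat.max L0 (S W))).
  exists L1; split; [unfold L1; lia|]; intros q' Hq' Ha.
  set (g := graft b W (fst q') (fst q1)).
  destruct (graft_spec k A b W L1 (fst q) (fst q') (fst q1) ltac:(lia) Hq' Hq1 Ha Hh)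
    as [Hg [Hgh Hga]].
  destruct (hol_exists k A theta f C0 Htheta HC0 Hlip b W _ _ Hq' Hg Hgh) as [l' Hl'].
  exists (g, snd q' + l'); cbn [fst snd].
  replace (snd q' + l' - snd q') with l' by ring.
  split; [eapply agree_mono; [|exact Hga]; lia|split].
  - apply Wdir_iff; cbn [fst snd]; replace (snd q' + l' - snd q') with l' by ring; auto.
  - rewrite Rabs_minus_sym; apply (HL b (fst q) (fst q1) (fst q') g); auto.
    + eapply agree_mono; [|exact Ha]; lia.
    + eapply agree_mono; [|exact Hga]; lia.
Qed.

Lemma step_shadow W q q1 L0 e : 0 < e -> inSFTR k A q -> step k A f W q q1 ->
  exists L1, (L0 <= L1)%nat /\ forall q', inSFTR k A q' -> agree (fst q) (fst q') L1 ->
  exists q1', agree (fst q1) (fst q1') L0 /\ step k A f W q' q1' /\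
    Rabs ((snd q1' - snd q') - (snd q1 - snd q)) <= e.
Proof.
  intros He Hq Hstep; apply step_iff in Hstep as [b Hb].
  destruct (Wdir_shadow b W q q1 L0 e He Hq Hb) as [L1 [HL1 Hsh]].
  exists L1; split; auto; intros q' Hq' Ha.
  destruct (Hsh q' Hq' Ha) as [q1' [Ha' [Hb' He']]].
  exists q1'; split; [|split]; auto; apply step_iff; eauto.
Qed.

Lemma chain_shadow W q0 m q : inSFTR k A q0 -> chainN k A f W q0 m q ->
  forall L0 e, 0 < e -> exists L d, 0 < d /\ forall q0', inSFTR k A q0' -> near L d q0 q0' ->
  exists q', chainN k A f W q0' m q' /\ near L0 e q q'.
Proof.
  intros Hq0 H; induction H as [|m q r H IH Hqr]; intros L0 e He.
  - exists L0, e; split; auto; intros q0' _ Hn; exists q0'; split; [constructor|auto].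
  - assert (Hq : inSFTR k A q) by (eapply chain_SFT; eauto).
    destruct (step_shadow W q r L0 (e / 2) ltac:(lra) Hq Hqr) as [L1 [HL1 Hsh]].
    destruct (IH L1 (e / 2) ltac:(lra)) as [L [d [Hd HLd]]].
    exists L, d; split; auto; intros q0' Hq0' Hn.
    destruct (HLd q0' Hq0' Hn) as [q' [Hc [Ha' Hr']]].
    destruct (Hsh q' (chain_SFT k A f W q0' m q' Hq0' Hc) Ha') as [r' [Har [Hs Hd']]].
    exists r'; split; [apply chainN_step with q'; auto|split; auto].
    replace (snd r' - snd r) with ((snd r' - snd q' - (snd r - snd q)) + (snd q' - snd q)) by ring.
    eapply Rle_lt_trans; [apply Rabs_triang|lra].
Qed.

End Shadowing.

(** * Sequential compactness of the shift space *)

Definition infinite (P : nat -> Prop) : Prop := forall M, exists n, (M <= n)%nat /\ P n.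

Lemma infinite_pigeonhole B (P : nat -> Prop) (g : nat -> nat) :
  infinite P -> (forall n, P n -> (g n < B)%nat) -> exists v, infinite (fun n => P n /\ g n = v).
Proof.
  revert P; induction B as [|B IH]; intros P HP Hg.
  { destruct (HP 0%nat) as [n [_ Pn]]; specialize (Hg n Pn); lia. }
  destruct (classic (infinite (fun n => P n /\ g n = B))) as [Hi|Hi]; [eauto|].
  apply not_all_ex_not in Hi as [M0 HM0].
  destruct (IH (fun n => P n /\ (M0 <= n)%nat)) as [v Hv].
  - intros M; destruct (HP (Nat.max M M0)) as [n [Hn Pn]]; exists n; split; [|split]; auto; lia.
  - intros n [Pn Hn]; specialize (Hg n Pn).
    destruct (Nat.eq_dec (g n) B) as [E|E]; [|lia].
    exfalso; apply HM0; exists n; auto.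
  - exists v; intros M; destruct (Hv M) as [n [Hn [[Pn _] Hgn]]]; exists n; auto.
Qed.

Definition frequent_value (P : nat -> Prop) (g : nat -> nat) : nat :=
  epsilon (inhabits 0%nat) (fun v => infinite (fun n => P n /\ g n = v)).

Definition freq_restrict (P : nat -> Prop) (g : nat -> nat) (n : nat) : Prop :=
  P n /\ g n = frequent_value P g.

Lemma freq_restrict_infinite B P g :
  infinite P -> (forall n, (g n < B)%nat) -> infinite (freq_restrict P g).
Proof.
  intros HP Hg; apply (epsilon_spec (inhabits 0%nat) (fun v => infinite (fun n => P n /\ g n = v))).
  apply (infinite_pigeonhole B); auto.
Qed.

Section ClusterPoint.

Variables (B : nat) (X : nat -> Seq).
Hypothesis HB : forall n i, (X n i < B)%nat.

(* Step [s] fixes the coordinates [s] and [-s] along an infinite set of indices. *)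
Fixpoint cluster_pred (s : nat) : nat -> Prop :=
  match s with
  | O => fun _ => True
  | S s => freq_restrict (freq_restrict (cluster_pred s) (fun n => X n (Z.of_nat s)))
                         (fun n => X n (- Z.of_nat s)%Z)
  end.

Definition cluster_seq : Seq := fun i =>
  if Z.leb 0 i then frequent_value (cluster_pred (Z.to_nat i)) (fun n => X n i)
  else frequent_value (freq_restrict (cluster_pred (Z.to_nat (- i))) (fun n => X n (- i)%Z))
                      (fun n => X n i).

Lemma cluster_pred_infinite s : infinite (cluster_pred s).
Proof.
  induction s as [|s IH]; [intros M; exists M; split; simpl; auto|].
  apply (freq_restrict_infinite B); auto; apply (freq_restrict_infinite B); auto.
Qed.

Lemma cluster_pred_mono s s' n : (s <= s')%nat -> cluster_pred s' n -> cluster_pred s n.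
Proof. induction 1; auto; intros [[Hm _] _]; auto. Qed.

Lemma cluster_pred_agree s n : cluster_pred s n -> agree (X n) cluster_seq s.
Proof.
  intros Hn i Hi; unfold cluster_seq; destruct (Z.leb_spec 0 i).
  - assert (Hs : cluster_pred (S (Z.to_nat i)) n) by (apply (cluster_pred_mono _ s); auto; lia).
    destruct Hs as [[_ Hs] _]; rewrite Z2Nat.id in Hs by lia; exact Hs.
  - assert (Hs : cluster_pred (S (Z.to_nat (- i))) n) by (apply (cluster_pred_mono _ s); auto; lia).
    destruct Hs as [_ Hs]; rewrite Z2Nat.id in Hs by lia.
    replace (- - i)%Z with i in Hs by lia; exact Hs.
Qed.

Lemma seq_cluster_point : exists Y, forall L M, exists n, (M <= n)%nat /\ agree (X n) Y L.
Proof.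
  exists cluster_seq; intros L M.
  destruct (cluster_pred_infinite L M) as [n [Hn Pn]].
  exists n; split; auto; apply cluster_pred_agree; auto.
Qed.

End ClusterPoint.

Fixpoint digits_encode (b D : nat) (g : nat -> nat) : nat :=
  match D with O => O | S D => (g O + b * digits_encode b D (fun c => g (S c)))%nat end.

Fixpoint digit (b c v : nat) : nat :=
  match c with O => Nat.modulo v b | S c => digit b c (Nat.div v b) end.

Lemma digit_encode b D g c : (c < D)%nat -> (forall c', (c' < D)%nat -> (g c' < b)%nat) ->
  digit b c (digits_encode b D g) = g c.
Proof.
  revert g c; induction D as [|D IH]; intros g c Hc Hg; [lia|].
  assert (Hb : b <> 0%nat) by (specialize (Hg 0%nat); lia).
  destruct c as [|c]; simpl.
  - rewrite Nat.mul_comm, Nat.Div0.mod_add; apply Nat.mod_small, Hg; lia.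
  - rewrite Nat.mul_comm, Nat.div_add, Nat.div_small by (auto; apply Hg; lia); simpl.
    apply (IH (fun c => g (S c))); [lia|intros; apply Hg; lia].
Qed.

Lemma digits_encode_lt b D g : (forall c, (c < D)%nat -> (g c < b)%nat) ->
  (digits_encode b D g < b ^ D)%nat.
Proof.
  revert g; induction D as [|D IH]; intros g Hg; simpl; [lia|].
  assert (digits_encode b D (fun c => g (S c)) < b ^ D)%nat by (apply IH; intros; apply Hg; lia).
  assert (g 0 < b)%nat by (apply Hg; lia); nia.
Qed.

Lemma family_cluster_point B D (X : nat -> nat -> Seq) :
  (forall n c i, (c < D)%nat -> (X n c i < B)%nat) ->
  exists Y : nat -> Seq, forall L M, exists n, (M <= n)%nat /\
    forall c, (c < D)%nat -> agree (X n c) (Y c) L.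
Proof.
  intros HB.
  destruct (seq_cluster_point (B ^ D) (fun n i => digits_encode B D (fun c => X n c i)))
    as [Y HY]; [intros; apply digits_encode_lt; auto|].
  exists (fun c i => digit B c (Y i)); intros L M.
  destruct (HY L M) as [n [Hn Ha]]; exists n; split; auto.
  intros c Hc i Hi; rewrite <- (Ha i Hi), digit_encode; auto.
Qed.

(** * Closedness of [AC_N] *)

Lemma inSFT_of_approx k A y : (forall L, exists x, inSFT k A x /\ agree x y L) -> inSFT k A y.
Proof.
  intros H i; destruct (H (S (S (Z.to_nat (Z.abs i))))) as [x [Hx Ha]].
  rewrite <- (Ha i), <- (Ha (i + 1)%Z) by lia; apply Hx.
Qed.

Lemma half_of_approx b W x y :
  (forall L, exists x' y', half b W x' y' /\ agree x' x L /\ agree y' y L) -> half b W x y.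
Proof.
  intros H; destruct b; intros i Hi;
    destruct (H (S (Z.to_nat (Z.abs i)))) as [x' [y' [Hh [Hx Hy]]]];
    rewrite <- (Hy i), <- (Hx i) by lia; apply Hh; auto.
Qed.

Section ChainLimits.

Variables (k : nat) (A : nat -> nat -> bool) (theta : R) (f : Seq -> R) (C0 : R).
Hypothesis Htheta : 0 < theta < 1.
Hypothesis HC0 : 0 <= C0.
Hypothesis Hlip : forall x y, inSFT k A x -> inSFT k A y ->
  Rabs (f x - f y) <= C0 * dtheta theta x y.

Lemma chain_holonomy_close W e : 0 < e ->
  exists L, forall m (ps ps' : nat -> Pt) (dir : nat -> bool),
  (forall c, (c <= m)%nat ->
     inSFTR k A (ps c) /\ inSFTR k A (ps' c) /\ agree (fst (ps c)) (fst (ps' c)) L) ->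
  (forall c, (c < m)%nat ->
     Wdir k A f (dir c) W (ps c) (ps (S c)) /\ Wdir k A f (dir c) W (ps' c) (ps' (S c))) ->
  Rabs ((snd (ps m) - snd (ps 0%nat)) - (snd (ps' m) - snd (ps' 0%nat))) <= INR m * e.
Proof.
  intros He; destruct (hol_continuous k A theta f C0 Htheta HC0 Hlip W e He) as [L HL].
  exists L; induction m as [|m IH]; intros ps ps' dir Hpts Hsteps.
  { simpl; rewrite !Rminus_diag, Rabs_R0; lra. }
  destruct (Hpts m ltac:(lia)) as [Hm [Hm' Ham]], (Hpts (S m) ltac:(lia)) as [_ [_ HaSm]].
  destruct (Hsteps m ltac:(lia)) as [Hs Hs']; apply Wdir_iff in Hs, Hs'.
  assert (Hstep : Rabs ((snd (ps (S m)) - snd (ps m)) - (snd (ps' (S m)) - snd (ps' m))) <= e)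
    by (apply (HL (dir m) (fst (ps m)) (fst (ps (S m))) (fst (ps' m)) (fst (ps' (S m)))); tauto).
  specialize (IH ps ps' dir ltac:(auto) ltac:(auto)).
  replace (snd (ps (S m)) - snd (ps 0%nat) - (snd (ps' (S m)) - snd (ps' 0%nat))) with
    ((snd (ps m) - snd (ps 0%nat) - (snd (ps' m) - snd (ps' 0%nat))) +
     (snd (ps (S m)) - snd (ps m) - (snd (ps' (S m)) - snd (ps' m)))) by ring.
  rewrite S_INR; eapply Rle_trans; [apply Rabs_triang|lra].
Qed.

Lemma chain_limit_endpoint W N (ps : nat -> Pt) (dir : nat -> bool) r :
  (forall c, (c <= N)%nat -> inSFTR k A (ps c)) ->
  (forall c, (c < N)%nat -> Wdir k A f (dir c) W (ps c) (ps (S c))) ->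
  (forall L e, 0 < e -> exists ps' : nat -> Pt, snd (ps' 0%nat) = snd (ps 0%nat) /\
     Rabs (snd (ps' N) - r) < e /\
     (forall c, (c <= N)%nat -> inSFTR k A (ps' c) /\ agree (fst (ps c)) (fst (ps' c)) L) /\
     (forall c, (c < N)%nat -> Wdir k A f (dir c) W (ps' c) (ps' (S c)))) ->
  snd (ps N) = r.
Proof.
  intros Hpts Hsteps Happrox; apply NNPP; intros Hne.
  set (e0 := Rabs (snd (ps N) - r)).
  assert (He0 : 0 < e0) by (apply Rabs_pos_lt; lra).
  assert (HN : 0 < INR N + 1) by (pose proof (pos_INR N); lra).
  destruct (chain_holonomy_close W (e0 / 2 / (INR N + 1))) as [L HL].
  { apply Rdiv_lt_0_compat; lra. }
  destruct (Happrox L (e0 / 2) ltac:(lra)) as [ps' [H0 [HN' [Hpts' Hsteps']]]].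
  specialize (HL N ps ps' dir ltac:(intros c Hc; specialize (Hpts' c Hc); split; [auto|tauto])
                ltac:(intros c Hc; split; auto)).
  rewrite H0 in HL.
  assert (Hfrac : INR N * (e0 / 2 / (INR N + 1)) < e0 / 2).
  { replace (INR N * (e0 / 2 / (INR N + 1))) with (e0 / 2 * (INR N / (INR N + 1))) by (field; lra).
    assert (INR N / (INR N + 1) < 1).
    { apply (Rmult_lt_reg_r (INR N + 1)); auto.
      unfold Rdiv; rewrite Rmult_assoc, Rinv_l; lra. }
    nra. }
  assert (Htri : e0 <= Rabs (snd (ps N) - snd (ps' N)) + Rabs (snd (ps' N) - r)).
  { unfold e0; replace (snd (ps N) - r) with ((snd (ps N) - snd (ps' N)) + (snd (ps' N) - r))
      by ring.
    apply Rabs_triang. }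
  replace (snd (ps N) - snd (ps 0%nat) - (snd (ps' N) - snd (ps 0%nat)))
    with (snd (ps N) - snd (ps' N)) in HL by ring.
  lra.
Qed.

Lemma limit_chain W N (Y : nat -> Seq) (dir : nat -> bool) r0 :
  (forall c, (c <= N)%nat -> inSFT k A (Y c)) ->
  (forall c, (c < N)%nat -> half (dir c) W (Y c) (Y (S c))) ->
  exists rho : nat -> R, rho 0%nat = r0 /\
    forall c, (c < N)%nat -> Wdir k A f (dir c) W (Y c, rho c) (Y (S c), rho (S c)).
Proof.
  intros HY Hh.
  destruct (choice (fun c l => (c < N)%nat -> Un_cv (hol_seq (dir c) f (Y c) (Y (S c))) l))
    as [h Hh'].
  { intros c; destruct (le_lt_dec N c) as [HNc|HcN]; [exists 0; intros; lia|].
    destruct (hol_exists k A theta f C0 Htheta HC0 Hlip (dir c) W (Y c) (Y (S c))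
                (HY c ltac:(lia)) (HY (S c) ltac:(lia)) (Hh c HcN)) as [l Hl].
    exists l; auto. }
  exists (fun c => r0 + psum h c); split; [simpl; ring|].
  intros c Hc; apply Wdir_iff; simpl; split; [|split]; auto.
  replace (r0 + (psum h c + h c) - (r0 + psum h c)) with (h c) by ring; auto.
Qed.

End ChainLimits.

Lemma chain_cluster k A f W N (PS : nat -> nat -> Pt) :
  (forall n c, (c <= N)%nat -> inSFTR k A (PS n c)) ->
  (forall n c, (c < N)%nat -> step k A f W (PS n c) (PS n (S c))) ->
  exists (Y : nat -> Seq) (dir : nat -> bool), forall L M, exists n, (M <= n)%nat /\
    (forall c, (c <= N)%nat -> agree (fst (PS n c)) (Y c) L) /\
    (forall c, (c < N)%nat -> Wdir k A f (dir c) W (PS n c) (PS n (S c))).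
Proof.
  intros HSFT Hsteps.
  destruct (choice (fun n (d : nat -> bool) =>
    forall c, (c < N)%nat -> Wdir k A f (d c) W (PS n c) (PS n (S c)))) as [dirs Hdirs].
  { intros n; apply (choice (fun c b => (c < N)%nat -> Wdir k A f b W (PS n c) (PS n (S c)))).
    intros c; destruct (le_lt_dec N c) as [HNc|HcN]; [exists true; intros; lia|].
    destruct (proj1 (step_iff k A f W _ _) (Hsteps n c HcN)) as [b Hb]; eauto. }
  (* The directions are recorded as constant sequences after the [N + 1] points. *)
  set (X := fun n c => if Nat.leb c N then fst (PS n c)
                       else fun _ : Z => if dirs n (c - S N)%nat then 1%nat else 0%nat).
  destruct (family_cluster_point (k + 2) (S N + N) X) as [Y HY].
  { intros n c i Hc; unfold X; destruct (Nat.leb_spec c N) as [HcN|HcN].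
    - destruct (HSFT n c HcN i); lia.
    - destruct dirs; lia. }
  exists Y, (fun c => Nat.eqb (Y (S N + c)%nat 0%Z) 1); intros L M.
  destruct (HY (S L) M) as [n [Hn Ha]]; exists n; split; [|split]; auto.
  - intros c Hc; eapply agree_mono; [|specialize (Ha c ltac:(lia)); unfold X in Ha;
      destruct (Nat.leb_spec c N); [exact Ha|lia]]; lia.
  - intros c Hc; specialize (Ha (S N + c)%nat ltac:(lia) 0%Z ltac:(simpl; lia)).
    unfold X in Ha; destruct (Nat.leb_spec (S N + c) N); [lia|].
    replace (S N + c - S N)%nat with c in Ha by lia.
    replace (Nat.eqb (Y (S N + c)%nat 0%Z) 1) with (dirs n c); [apply Hdirs; auto|].
    rewrite <- Ha; destruct (dirs n c); reflexivity.
Qed.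

Lemma chain_limit_points k A f W N (PS : nat -> nat -> Pt) :
  (forall n c, (c <= N)%nat -> inSFTR k A (PS n c)) ->
  (forall n c, (c < N)%nat -> step k A f W (PS n c) (PS n (S c))) ->
  exists (Y : nat -> Seq) (dir : nat -> bool),
    (forall c, (c <= N)%nat -> inSFT k A (Y c)) /\
    (forall c, (c < N)%nat -> half (dir c) W (Y c) (Y (S c))) /\
    forall L M, exists n, (M <= n)%nat /\
      (forall c, (c <= N)%nat -> agree (fst (PS n c)) (Y c) L) /\
      (forall c, (c < N)%nat -> Wdir k A f (dir c) W (PS n c) (PS n (S c))).
Proof.
  intros HSFT Hsteps; destruct (chain_cluster k A f W N PS HSFT Hsteps) as [Y [dir HY]].
  exists Y, dir; split; [|split]; auto.
  - intros c Hc; apply inSFT_of_approx; intros L; destruct (HY L 0%nat) as [n [_ [Ha _]]].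
    exists (fst (PS n c)); split; auto; apply HSFT; auto.
  - intros c Hc; apply half_of_approx; intros L; destruct (HY L 0%nat) as [n [_ [Ha Hs]]].
    exists (fst (PS n c)), (fst (PS n (S c))); split; [|split; apply Ha; lia].
    apply (Wdir_iff k A f), Hs; auto.
Qed.

Section Closedness.

Variables (k : nat) (A : nat -> nat -> bool) (theta : R) (f : Seq -> R) (C0 : R).
Hypothesis Htheta : 0 < theta < 1.
Hypothesis HC0 : 0 <= C0.
Hypothesis Hlip : forall x y, inSFT k A x -> inSFT k A y ->
  Rabs (f x - f y) <= C0 * dtheta theta x y.

Lemma AC_N_closed N p q : inSFTR k A p ->
  (forall n, exists q', AC_N k A f N p q' /\ near n (/ (INR n + 1)) q q') -> AC_N k A f N p q.
Proof.
  intros Hp Happrox.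
  destruct (choice (fun n (ps : nat -> Pt) => ps 0%nat = p /\ near n (/ (INR n + 1)) q (ps N) /\
    forall c, (c < N)%nat -> step k A f N (ps c) (ps (S c)))) as [PS HPS].
  { intros n; destruct (Happrox n) as [q' [[m [Hm Hc]] Hnear]].
    destruct (chain_fun k A f N p N q' (chain_pad k A f N p m q' N Hp Hc Hm)) as [ps [H0 [HN Hs]]].
    exists ps; rewrite HN; auto. }
  assert (HSFT : forall n c, (c <= N)%nat -> inSFTR k A (PS n c)).
  { intros n; destruct (HPS n) as [H0 [_ Hs]].
    apply (fun_chain_SFT k A f N); auto; rewrite H0; auto. }
  destruct (chain_limit_points k A f N N PS HSFT (fun n => proj2 (proj2 (HPS n))))
    as [Y [dir [HYSFT [Hhalf HY]]]].
  assert (HY0 : Y 0%nat = fst p).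
  { apply agree_all_eq; intros L; destruct (HY L 0%nat) as [n [_ [Ha _]]].
    destruct (HPS n) as [H0 _]; rewrite <- H0; apply agree_sym, Ha; lia. }
  assert (HYN : Y N = fst q).
  { apply agree_all_eq; intros L; destruct (HY L L) as [n [Hn [Ha _]]].
    destruct (HPS n) as [_ [[Hq _] _]]; apply agree_sym; eapply agree_trans.
    - eapply agree_mono; [exact Hn|exact Hq].
    - apply Ha; lia. }
  destruct (limit_chain k A theta f C0 Htheta HC0 Hlip N N Y dir (snd p) HYSFT Hhalf)
    as [rho [Hrho0 Hrho]].
  assert (HrhoN : rho N = snd q).
  { apply (chain_limit_endpoint k A theta f C0 Htheta HC0 Hlip N N (fun c => (Y c, rho c)) dir);
      auto.
    intros L e He; destruct (archimed_cor1 e He) as [M [HM HM0]].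
    destruct (HY L M) as [n [Hn [Ha Hs]]].
    exists (PS n); destruct (HPS n) as [H0 [[_ Hr] Hsteps]]; simpl.
    split; [rewrite H0, Hrho0; auto|split; [|split]].
    - eapply Rlt_le_trans; [exact Hr|]; eapply Rle_trans; [|apply Rlt_le, HM].
      apply Rinv_le_contravar; [apply lt_0_INR; lia|]; apply le_INR in Hn; lra.
    - intros c Hc; split; [apply HSFT; auto|apply agree_sym, Ha; auto].
    - intros c Hc; apply Hs; auto. }
  exists N; split; auto.
  rewrite (surjective_pairing p), (surjective_pairing q), <- HY0, <- HYN, <- Hrho0, <- HrhoN.
  apply (fun_chain k A f N (fun c => (Y c, rho c))); intros c Hc; apply step_iff; eauto.
Qed.

End Closedness.

(** * Cylinders, compactness and the Baire argument *)

Lemma le_list_max l i : In i l -> (i <= list_max l)%nat.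
Proof. intros Hi; apply (proj1 (Forall_forall _ l) (proj1 (list_max_le l _) (le_n _)) i Hi). Qed.

Definition box k A (L : nat) (d : R) (c q : Pt) : Prop :=
  inSFTR k A q /\ agree (fst c) (fst q) L /\ Rabs (snd q - snd c) <= d.

Section Topology.

Variables (k : nat) (A : nat -> nat -> bool) (theta : R).
Hypothesis Htheta : 0 < theta < 1.

Lemma agree_of_distP_lt q q' L : distP theta q q' < theta ^ L -> agree (fst q) (fst q') L.
Proof.
  intros H; apply (agree_of_dtheta_lt theta Htheta).
  eapply Rle_lt_trans; [apply Rmax_l|exact H].
Qed.

Lemma Rabs_snd_le_distP q q' : Rabs (snd q' - snd q) <= distP theta q q'.
Proof. rewrite Rabs_minus_sym; apply Rmax_r. Qed.

Lemma distP_lt_of_near L e q q' : near L e q q' -> theta ^ L < e -> distP theta q q' < e.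
Proof.
  intros [Ha Hr] HL; apply Rmax_lub_lt; [|rewrite Rabs_minus_sym; exact Hr].
  eapply Rle_lt_trans; [apply (dtheta_le_pow theta Htheta); exact Ha|exact HL].
Qed.

Lemma near_open L d c : is_openP k A theta (fun q => inSFTR k A q /\ near L d c q).
Proof.
  split; [tauto|]; intros q [Hq [Ha Hr]].
  exists (Rmin (theta ^ L) (d - Rabs (snd q - snd c))); split.
  { apply Rmin_glb_lt; [apply pow_lt|]; lra. }
  intros q' Hq' Hdist; split; [|split]; auto.
  - eapply agree_trans; [exact Ha|]; apply agree_of_distP_lt.
    eapply Rlt_le_trans; [exact Hdist|apply Rmin_l].
  - pose proof (Rabs_snd_le_distP q q'); pose proof (Rmin_r (theta ^ L) (d - Rabs (snd q - snd c))).
    replace (snd q' - snd c) with ((snd q' - snd q) + (snd q - snd c)) by ring.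
    eapply Rle_lt_trans; [apply Rabs_triang|lra].
Qed.

Lemma box_compl_open L d c : is_openP k A theta (fun q => inSFTR k A q /\ ~ box k A L d c q).
Proof.
  split; [tauto|]; intros q [Hq Hout].
  destruct (classic (agree (fst c) (fst q) L)) as [Ha|Ha].
  - assert (Hr : d < Rabs (snd q - snd c))
      by (apply Rnot_le_lt; intros Hr; apply Hout; split; auto).
    exists (Rabs (snd q - snd c) - d); split; [lra|]; intros q' Hq' Hdist; split; auto.
    intros [_ [_ Hr']]; pose proof (Rabs_snd_le_distP q q').
    assert (Rabs (snd q - snd c) <= Rabs (snd q' - snd q) + Rabs (snd q' - snd c)).
    { replace (snd q - snd c) with (- (snd q' - snd q) + (snd q' - snd c)) by ring.
      eapply Rle_trans; [apply Rabs_triang|rewrite Rabs_Ropp; lra]. }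
    lra.
  - exists (theta ^ L); split; [apply pow_lt; lra|]; intros q' Hq' Hdist; split; auto.
    intros [_ [Ha' _]]; apply Ha; eapply agree_trans; [exact Ha'|].
    apply agree_sym, agree_of_distP_lt; auto.
Qed.

Lemma interior_contains_box K c : interiorP k A theta K c ->
  exists L d, 0 < d /\ forall q, box k A L d c q -> K q.
Proof.
  intros [_ [_ [eps [Heps Hball]]]].
  destruct (pow_theta_small theta Htheta 1 eps Heps) as [L HL]; rewrite Rmult_1_l in HL.
  exists L, (eps / 2); split; [lra|]; intros q [Hq [Ha Hr]].
  apply Hball; auto; apply (distP_lt_of_near L); auto; split; auto; lra.
Qed.

Lemma compact_nested K (C : nat -> Pt -> Prop) : is_compactP k A theta K ->
  (forall n, is_openP k A theta (fun q => inSFTR k A q /\ ~ C n q)) ->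
  (forall n m q, (n <= m)%nat -> C m q -> C n q) ->
  (forall n, exists q, K q /\ C n q) ->
  exists q, K q /\ forall n, C n q.
Proof.
  intros [HKS HK] Hopen Hnest Hne; apply NNPP; intros Hno.
  destruct (HK nat (fun n q => inSFTR k A q /\ ~ C n q) Hopen) as [l Hl].
  { intros q Hq; apply NNPP; intros Hq'; apply Hno; exists q; split; auto.
    intros n; apply NNPP; intros Hn; apply Hq'; exists n; split; auto. }
  destruct (Hne (list_max l)) as [q [Hq HC]].
  destruct (Hl q Hq) as [n [Hn [_ HnC]]].
  apply HnC, (Hnest n (list_max l)); auto; apply le_list_max; auto.
Qed.

Lemma compact_uniform K (P : nat -> Pt -> Prop) : is_compactP k A theta K ->
  (forall N N' q, (N <= N')%nat -> P N q -> P N' q) ->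
  (forall q, K q -> exists N L d, 0 < d /\
     forall q', inSFTR k A q' -> near L d q q' -> P N q') ->
  exists N, forall q, K q -> P N q.
Proof.
  intros [HKS HK] Hmono Hloc.
  set (U := fun (i : nat * nat * R * Pt) q => let '(N, L, d, c) := i in
    (inSFTR k A q /\ near L d c q) /\ forall q', inSFTR k A q' -> near L d c q' -> P N q').
  destruct (HK _ U) as [l Hl].
  - intros [[[N L] d] c]; split; [intros q [[Hq _] _]; auto|].
    intros q [Hnear HP]; destruct (proj2 (near_open L d c) q Hnear) as [eps [Heps Hball]].
    exists eps; split; auto; intros q' Hq' Hdist; split; auto.
  - intros q Hq; destruct (Hloc q Hq) as [N [L [d [Hd HP]]]].
    exists (N, L, d, q); split; auto; split; [apply HKS; auto|apply near_refl; auto].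
  - exists (list_max (map (fun i => fst (fst (fst i))) l)); intros q Hq.
    destruct (Hl q Hq) as [[[[N L] d] c] [Hin [Hnear HP]]].
    apply (Hmono N); [|apply HP; apply Hnear].
    apply le_list_max, (in_map (fun i : nat * nat * R * Pt => fst (fst (fst i))) l _ Hin).
Qed.

End Topology.

Section Accessibility.

Variables (k : nat) (A : nat -> nat -> bool) (theta : R) (f : Seq -> R) (C0 : R) (p : Pt).
Hypothesis Htheta : 0 < theta < 1.
Hypothesis HC0 : 0 <= C0.
Hypothesis Hlip : forall x y, inSFT k A x -> inSFT k A y ->
  Rabs (f x - f y) <= C0 * dtheta theta x y.
Hypothesis Hp : inSFTR k A p.

Definition AC_N_on_cylinder (N : nat) (v : Pt) (L : nat) (d : R) : Prop :=
  0 < d /\ inSFTR k A v /\ forall q, inSFTR k A q -> near L d v q -> AC_N k A f N p q.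

Lemma not_AC_N_near N q : inSFTR k A q -> ~ AC_N k A f N p q ->
  exists L d, 0 < d /\ forall q', inSFTR k A q' -> near L d q q' -> ~ AC_N k A f N p q'.
Proof.
  intros Hq Hnot; apply NNPP; intros Hno; apply Hnot.
  apply (AC_N_closed k A theta f C0 Htheta HC0 Hlip N p q Hp); intros n.
  apply NNPP; intros Hn; apply Hno; exists n, (/ (INR n + 1)); split.
  { apply Rinv_0_lt_compat; pose proof (pos_INR n); lra. }
  intros q' Hq' Hnear HAC; apply Hn; eauto.
Qed.

Lemma box_avoiding_AC_N n c L d : (forall N v L' d', ~ AC_N_on_cylinder N v L' d') ->
  inSFTR k A c -> 0 < d -> exists c' L' d', inSFTR k A c' /\ 0 < d' /\
  (forall q, box k A L' d' c' q -> box k A L d c q) /\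
  (forall q, box k A L' d' c' q -> ~ AC_N k A f n p q).
Proof.
  intros Hno Hc Hd.
  assert (Hq' : exists q', inSFTR k A q' /\ near L (d / 2) c q' /\ ~ AC_N k A f n p q').
  { apply NNPP; intros H; apply (Hno n c L (d / 2)); split; [lra|split; auto].
    intros q' Hq' Hnear; apply NNPP; intros Hn; apply H; eauto. }
  destruct Hq' as [q' [Hq' [[Ha Hr] Hnot]]].
  destruct (not_AC_N_near n q' Hq' Hnot) as [L' [d' [Hd' Hfar]]].
  exists q', (Nat.max L L'), (Rmin (d' / 2) (d / 4)).
  assert (Hmin : 0 < Rmin (d' / 2) (d / 4)) by (apply Rmin_glb_lt; lra).
  pose proof (Rmin_l (d' / 2) (d / 4)); pose proof (Rmin_r (d' / 2) (d / 4)).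
  split; [|split; [|split]]; auto; intros q [Hq [Haq Hrq]].
  - split; [|split]; auto.
    + eapply agree_trans; [exact Ha|]; eapply agree_mono; [|exact Haq]; lia.
    + replace (snd q - snd c) with ((snd q - snd q') + (snd q' - snd c)) by ring.
      eapply Rle_trans; [apply Rabs_triang|lra].
  - apply Hfar; auto; split; [eapply agree_mono; [|exact Haq]; lia|lra].
Qed.

Lemma AC_N_on_some_cylinder K c0 L0 d0 : is_compactP k A theta K ->
  inSFTR k A c0 -> 0 < d0 -> (forall q, box k A L0 d0 c0 q -> K q) ->
  (forall q, K q -> exists N, AC_N k A f N p q) ->
  exists N v L d, AC_N_on_cylinder N v L d.
Proof.
  intros HK Hc0 Hd0 HK0 HAC; apply NNPP; intros Hne.
  assert (Hno : forall N v L d, ~ AC_N_on_cylinder N v L d)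
    by (intros N v L d Hcyl; apply Hne; eauto).
  set (valid := fun b : Pt * nat * R => inSFTR k A (fst (fst b)) /\ 0 < snd b).
  set (inb := fun (b : Pt * nat * R) q => box k A (snd (fst b)) (snd b) (fst (fst b)) q).
  destruct (choice (fun (nb : nat * (Pt * nat * R)) b' => valid (snd nb) ->
    valid b' /\ (forall q, inb b' q -> inb (snd nb) q) /\
    (forall q, inb b' q -> ~ AC_N k A f (fst nb) p q))) as [next Hnext].
  { intros [n [[c L] d]]; destruct (classic (valid (c, L, d))) as [[Hc Hd]|Hinv].
    - destruct (box_avoiding_AC_N n c L d Hno Hc Hd) as [c' [L' [d' [Hc' [Hd' [Hsub Hdisj]]]]]].
      exists (c', L', d'); intros _; split; [split|split]; auto.
    - exists (c, L, d); intros Hv; contradiction. }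
  set (bs := nat_rect (fun _ => (Pt * nat * R)%type) (c0, L0, d0) (fun n b => next (n, b))).
  assert (Hvalid : forall n, valid (bs n)).
  { induction n as [|n IH]; [split; auto|apply (Hnext (n, bs n)); auto]. }
  assert (Hnest : forall n m q, (n <= m)%nat -> inb (bs m) q -> inb (bs n) q).
  { intros n m q Hnm; induction Hnm as [|m Hnm IH]; auto.
    intros Hq; apply IH, (proj1 (proj2 (Hnext (m, bs m) (Hvalid m)))), Hq. }
  destruct (compact_nested k A theta K (fun n => inb (bs n)) HK) as [q [Hq Hall]]; auto.
  - intros n; apply box_compl_open; auto.
  - intros n; exists (fst (fst (bs n))).
    assert (Hcenter : inb (bs n) (fst (fst (bs n)))).
    { split; [apply Hvalid|split; [apply agree_refl|]].
      rewrite Rminus_diag, Rabs_R0; apply Rlt_le, Hvalid. }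
    split; auto; apply HK0, (Hnest 0%nat n); auto; lia.
  - destruct (HAC q Hq) as [N HN].
    apply ((proj2 (proj2 (Hnext (N, bs N) (Hvalid N)))) q); auto; apply (Hall (S N)).
Qed.

Lemma AC_N_near_of_AC N0 v Lv dv q : AC_N_on_cylinder N0 v Lv dv ->
  inSFTR k A q -> AC k A f p q ->
  exists N L d, 0 < d /\ forall q', inSFTR k A q' -> near L d q q' -> AC_N k A f N p q'.
Proof.
  intros [Hdv [Hv Hball]] Hq HACq.
  destruct (AC_N_of_AC k A f p q HACq) as [M [m [Hm Hc]]].
  destruct (Hball v Hv (near_refl Lv dv v Hdv)) as [m0 [Hm0 Hc0]].
  set (W := Nat.max M N0).
  assert (Hqv : chainN k A f W q (m + m0) v).
  { eapply chain_app; [apply (chain_rev k A f W p m q Hp)|];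
      (eapply chain_mono; [|eauto]); unfold W; lia. }
  destruct (chain_shadow k A theta f C0 Htheta HC0 Hlip W q (m + m0) v Hq Hqv Lv dv Hdv)
    as [L [d [Hd Hsh]]].
  exists (N0 + M + N0 + W)%nat, L, d; split; auto; intros q' Hq' Hnear.
  destruct (Hsh q' Hq' Hnear) as [v' [Hc' Hnear']].
  destruct (Hball v' (chain_SFT k A f W q' (m + m0) v' Hq' Hc') Hnear') as [m1 [Hm1 Hc1]].
  exists (m1 + (m + m0))%nat; split; [lia|]; eapply chain_app.
  - eapply chain_mono; [|exact Hc1]; unfold W; lia.
  - eapply chain_mono; [|apply (chain_rev k A f W q' (m + m0) v' Hq' Hc')]; unfold W; lia.
Qed.

End Accessibility.

Lemma lipschitz_theta_nonneg k A theta f : 0 < theta < 1 -> lipschitz_theta k A theta f ->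
  exists C0, 0 <= C0 /\ forall x y, inSFT k A x -> inSFT k A y ->
    Rabs (f x - f y) <= C0 * dtheta theta x y.
Proof.
  intros Htheta [C HC]; exists (Rabs C); split; [apply Rabs_pos|intros x y Hx Hy].
  eapply Rle_trans; [apply HC; auto|].
  apply Rmult_le_compat_r; [apply dtheta_nonneg; auto|apply RRle_abs].
Qed.

Theorem proposition9p4
  (k : nat) (A : nat -> nat -> bool) (theta : R) (f : Seq -> R)
  (K : Pt -> Prop) (p : Pt) :
  0 < theta < 1 ->
  lipschitz_theta k A theta f ->
  is_compactP k A theta K ->
  (forall q, closureP k A theta (interiorP k A theta K) q <-> K q) ->
  inSFTR k A p ->
  (forall q, K q -> AC k A f p q) ->
  exists N : nat, forall q, K q -> AC_N k A f N p q.
Proof.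
  intros Htheta Hlip HK Hcl Hp HAC.
  destruct (lipschitz_theta_nonneg k A theta f Htheta Hlip) as [C0 [HC0 Hf]].
  destruct (classic (exists q, K q)) as [[q0 Hq0]|Hempty];
    [|exists 0%nat; intros q Hq; exfalso; eauto].
  destruct (proj2 (proj2 (Hcl q0) Hq0) 1 ltac:(lra)) as [c [Hc _]].
  destruct (interior_contains_box k A theta Htheta K c Hc) as [L0 [d0 [Hd0 HK0]]].
  destruct (AC_N_on_some_cylinder k A theta f C0 p Htheta HC0 Hf Hp K c L0 d0 HK)
    as [N0 [v [Lv [dv Hcyl]]]]; auto.
  { exact (proj1 (proj2 Hc)). }
  { intros q Hq; apply AC_N_of_AC, HAC; auto. }
  apply (compact_uniform k A theta Htheta K (fun N q => AC_N k A f N p q) HK).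
  - intros N N' q HN; apply AC_N_mono; auto.
  - intros q Hq; apply (AC_N_near_of_AC k A theta f C0 p Htheta HC0 Hf Hp N0 v Lv dv); auto.
    apply HK; auto.
Qed.
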